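(* For any probability measures $\mu,\mu_1,\mu_2$ on $\mathbb{R}^n,\mathbb{R}^{n_1},\mathbb{R}^{n_2}$ satisfying $\mathrm{IC}(\beta)$, $\mathrm{IC}(\beta_1)$, $\mathrm{IC}(\beta_2)$ respectively: 1. If $L$ is an affine map, then $L_{\#}\mu$ satisfies $\mathrm{IC}(\beta)$. 2. The product $\mu_1\otimes\mu_2$ satisfies $\mathrm{IC}(\beta_1\vee\beta_2)$. 3. If $n_1=n_2$, then the convolution $\mu_1*\mu_2$ satisfies $\mathrm{IC}(\beta_1\vee\beta_2)$. 4. The symmetrization $\overline{\mu}$ satisfies $\mathrm{IC}(\beta)$.
   Context: $T_{\#}\mu(A)=\mu(T^{-1}(A))$ is the push-forward; $x\vee y=\max\{x,y\}$. A pair $(\mu,W)$, with $\mu$ a probability measure on $\mathbb{R}^n$ and $W:\mathbb{R}^n\to[0,\infty]$, satisfies property $(\tau)$ if for every bounded function $f$, $\int e^{h}\,d\mu\int e^{-f}\,d\mu\le 1$, where $h(x)=\inf_{y}\{W(x-y)+f(y)\}$ is the infimum convolution of $W$ and $f$. For a measure $\mu$, $\mu'$ is its reflection through the origin, $\overline{\mu}=\mu*\mu'$, $\Lambda_\mu=\ln\int e^{\langle \cdot,y\rangle}d\mu(y)$, and $\Lambda^*_\mu(x)=\sup_y\{\langle x,y\rangle-\Lambda_\mu(y)\}$. A probability measure $\mu$ satisfies $\mathrm{IC}(\beta)$ ($\beta>0$) if the pair $(\mu,\Lambda^*_{\overline{\mu}}(\cdot/\beta))$ satisfies property $(\tau)$.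 *)

From HB Require Import structures.
From mathcomp Require Import all_boot all_order all_algebra.
From mathcomp Require Import all_classical all_reals all_analysis.
Set Implicit Arguments. Unset Strict Implicit. Unset Printing Implicit Defensive.
Import Order.TTheory GRing.Theory Num.Theory.
Import numFieldNormedType.Exports.
Local Open Scope classical_set_scope.
Local Open Scope ring_scope.

(* R^n is represented by row vectors 'rV[R]_n, equipped with the Borel
   sigma-algebra = the sigma-algebra generated by the coordinate maps. *)
Definition rV_display : measure_display -> measure_display.
Proof. exact. Qed.

Section measurable_rV.
Context (R : realType) (n : nat).

Let coor : 'I_n -> 'rV[R]_n -> R := fun i x => x ord0 i.

Let rV_set0 : g_sigma_preimage coor set0.
Proof. exact: sigma_algebra0. Qed.

Let rV_setC A : g_sigma_preimage coor A -> g_sigma_preimage coor (~` A).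
Proof. exact: sigma_algebraC. Qed.

Let rV_bigcup (F : _^nat) : (forall i, g_sigma_preimage coor (F i)) ->
  g_sigma_preimage coor (\bigcup_i (F i)).
Proof. exact: sigma_algebra_bigcup. Qed.

HB.instance Definition _ := @isMeasurable.Build (rV_display default_measure_display)
  'rV[R]_n (g_sigma_preimage coor) rV_set0 rV_setC rV_bigcup.

End measurable_rV.

Section IC_defs.
Context (R : realType).
Local Open Scope ereal_scope.

Definition dotp n (x y : 'rV[R]_n) : R := (\sum_(i < n) x ord0 i * y ord0 i)%R.

Definition reflect_meas n (mu : set 'rV[R]_n -> \bar R) : set 'rV[R]_n -> \bar R :=
  pushforward mu (fun x => - x)%R.

Definition conv_meas n (mu1 mu2 : set 'rV[R]_n -> \bar R) : set 'rV[R]_n -> \bar R :=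
  pushforward (mu1 \x mu2) (fun p : 'rV[R]_n * 'rV[R]_n => p.1 + p.2)%R.

Definition symm_meas n (mu : set 'rV[R]_n -> \bar R) : set 'rV[R]_n -> \bar R :=
  conv_meas mu (reflect_meas mu).

Definition prod_meas n1 n2 (mu1 : set 'rV[R]_n1 -> \bar R)
  (mu2 : set 'rV[R]_n2 -> \bar R) : set 'rV[R]_(n1 + n2) -> \bar R :=
  pushforward (mu1 \x mu2) (fun p : 'rV[R]_n1 * 'rV[R]_n2 => row_mx p.1 p.2).

Definition Lambda n (mu : set 'rV[R]_n -> \bar R) (y : 'rV[R]_n) : \bar R :=
  match \int[mu]_x (expR (dotp x y))%:E with
  | r%:E => (ln r)%:E
  | +oo => +oo
  | -oo => -oo
  end.

Definition legendre n (L : 'rV[R]_n -> \bar R) (x : 'rV[R]_n) : \bar R :=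
  ereal_sup [set (dotp x y)%:E - L y | y in [set: 'rV[R]_n]].

Definition inf_conv n (W : 'rV[R]_n -> \bar R) (f : 'rV[R]_n -> R) (x : 'rV[R]_n)
  : \bar R :=
  ereal_inf [set W (x - y)%R + (f y)%:E | y in [set: 'rV[R]_n]].

Definition property_tau n (mu : set 'rV[R]_n -> \bar R) (W : 'rV[R]_n -> \bar R)
  : Prop :=
  forall f : 'rV[R]_n -> R,
    measurable_fun [set: 'rV[R]_n] f ->
    (exists M : R, forall x, (`|f x| <= M)%R) ->
    (\int[mu]_x expeR (inf_conv W f x)) * (\int[mu]_x (expR (- f x))%:E) <= 1.

Definition IC n (beta : R) (mu : set 'rV[R]_n -> \bar R) : Prop :=
  property_tau mu (fun x => legendre (Lambda (symm_meas mu)) (beta^-1 *: x)%R).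

Definition affine_map n m (L : 'rV[R]_n -> 'rV[R]_m) : Prop :=
  exists (A : 'M[R]_(n, m)) (b : 'rV[R]_m), forall x, L x = (x *m A + b)%R.

End IC_defs.

(* The log-Laplace transform [Lambda] of a symmetrised probability is
   nonnegative and vanishes at 0 (because e^t + e^-t >= 2), hence so is its
   Legendre transform, and Lambda^*(t u) <= Lambda^*(u) for t in [0, 1]: the
   cost of IC(beta) can only decrease when beta grows.  Under an affine map
   x |-> x A + b the translation cancels in the symmetrisation, so the cost of
   the image at u A is at most the cost of mu at u, and (tau) transfers by
   testing mu with f o L.  For a product the transform splits over the two
   blocks of coordinates, so the cost is at most the sum of the two costs, and
   (tau) tensorises: apply (tau) for mu2 to the sections of f shifted by the
   first cost, then (tau) for mu1 to phi = - ln \int e^(-f(., y)) dmu2(y).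
   Convolution is the image of the product under addition, and the
   symmetrisation is the convolution with the reflection, an affine image. *)

From HB Require Import structures.
From mathcomp Require Import all_boot all_order all_algebra.
From mathcomp Require Import all_classical all_reals all_analysis.
From mathcomp Require Import measurable_realfun.
From mathcomp Require Import ring lra.
Set Implicit Arguments. Unset Strict Implicit. Unset Printing Implicit Defensive.
Import Order.TTheory GRing.Theory Num.Theory.
Import numFieldNormedType.Exports.
Local Open Scope classical_set_scope.
Local Open Scope ring_scope.

Section rV_measurable.
Context (R : realType).

Lemma measurable_coord n (i : 'I_n) :
  measurable_fun [set: 'rV[R]_n] (fun x => x ord0 i).
Proof.
move=> _ Y mY; rewrite setTI; apply: sub_sigma_algebra => /=.
rewrite -bigcup_seq/=; exists i => /=; first by rewrite mem_index_enum.
by exists Y => //; rewrite setTI.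
Qed.

Lemma measurable_rV d (T : measurableType d) n (f : T -> 'rV[R]_n) :
  (forall i, measurable_fun [set: T] (fun x => f x ord0 i)) ->
  measurable_fun [set: T] f.
Proof.
move=> mf _ A mA; rewrite setTI.
have : A \in g_sigma_preimage (fun (i : 'I_n) (x : 'rV[R]_n) => x ord0 i).
  by rewrite inE.
rewrite inE => {mA}; move: A; apply: smallest_sub.
  split.
  - by rewrite preimage_set0; exact: measurable0.
  - by move=> A mA; rewrite setTD -preimage_setC; exact: measurableC.
  - by move=> F mF; rewrite preimage_bigcup; exact: bigcupT_measurable.
case: n => [|n] in f mf *; first by rewrite big_ord0.
rewrite -bigcup_mkord_ord; apply: bigcup_sub => i Ii A [B mB <-].
rewrite setTI -comp_preimage.
have -> : inord i = Ordinal Ii by apply/val_inj => /=; rewrite inordK.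
by have := mf (Ordinal Ii) measurableT B mB; rewrite setTI.
Qed.

Lemma measurable_dotp n (y : 'rV[R]_n) :
  measurable_fun [set: 'rV[R]_n] (fun x => dotp x y).
Proof.
rewrite /dotp; apply: measurable_sum => i.
by apply: measurable_funM => //; exact: measurable_coord.
Qed.

Lemma measurable_expR_dotp n (y : 'rV[R]_n) :
  measurable_fun [set: 'rV[R]_n] (fun x => (expR (dotp x y))%:E).
Proof.
apply/measurable_EFinP.
exact: measurableT_comp (@measurable_expR R) (measurable_dotp y).
Qed.

Lemma measurable_affine n m (A : 'M[R]_(n, m)) (b : 'rV[R]_m) :
  measurable_fun [set: 'rV[R]_n] (fun x => x *m A + b).
Proof.
apply: measurable_rV => j; under eq_fun do rewrite !mxE.
apply: measurable_funD => //; apply: measurable_sum => i.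
by apply: measurable_funM => //; exact: measurable_coord.
Qed.

Lemma measurable_row_mx n1 n2 :
  measurable_fun [set: 'rV[R]_n1 * 'rV[R]_n2] (fun p => row_mx p.1 p.2).
Proof.
apply: measurable_rV => j; case: (splitP j) => k jk.
  have -> : j = lshift n2 k by apply: val_inj.
  under eq_fun do rewrite row_mxEl.
  exact: measurableT_comp (measurable_coord k) measurable_fst.
have -> : j = rshift n1 k by apply: val_inj.
under eq_fun do rewrite row_mxEr.
exact: measurableT_comp (measurable_coord k) measurable_snd.
Qed.

Lemma measurable_addrV n :
  measurable_fun [set: 'rV[R]_n * 'rV[R]_n] (fun p => p.1 + p.2).
Proof.
apply: measurable_rV => j; under eq_fun do rewrite !mxE.
by apply: measurable_funD; apply: measurableT_comp (measurable_coord j) _.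
Qed.

Lemma measurable_opprV n : measurable_fun [set: 'rV[R]_n] (fun x => - x).
Proof.
apply: measurable_rV => j; under eq_fun do rewrite !mxE.
exact: measurableT_comp _ (measurable_coord j).
Qed.

End rV_measurable.

(* Packing the measurability proof makes [distribution mu (mfun_of mf)], which
   is convertible to [pushforward mu f], canonically a probability.  The three
   probabilities below are thus convertible to [reflect_meas mu],
   [symm_meas mu] and [prod_meas mu1 mu2]. *)
Definition mfun_of d1 d2 (X : measurableType d1) (Y : measurableType d2)
    (f : X -> Y) (mf : measurable_fun [set: X] f) : {mfun X >-> Y} :=
  HB.pack f (isMeasurableFun.Build _ _ _ _ f mf).

Section rV_probabilities.
Context (R : realType).

Definition reflect_probability n (mu : probability 'rV[R]_n R)
  : probability 'rV[R]_n R :=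
  distribution mu (mfun_of (@measurable_opprV R n)).

Definition symm_probability n (mu : probability 'rV[R]_n R)
  : probability 'rV[R]_n R :=
  distribution (mu \x reflect_probability mu)%E (mfun_of (@measurable_addrV R n)).

Definition prod_probability n1 n2 (mu1 : probability 'rV[R]_n1 R)
    (mu2 : probability 'rV[R]_n2 R) : probability 'rV[R]_(n1 + n2) R :=
  distribution (mu1 \x mu2)%E (mfun_of (@measurable_row_mx R n1 n2)).

End rV_probabilities.

Section integral_inequalities.
Local Open Scope ereal_scope.
Context (R : realType).
Import HBNNSimple.

(* No measurability is required: a nonnegative integral is the supremum of the
   integrals of the simple functions below it.  This matters because the
   integrands built from [inf_conv] below need not be measurable. *)
Lemma ge0_le_integralT d (T : measurableType d) (mu : {measure set T -> \bar R})
    (f g : T -> \bar R) :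
  (forall x, 0 <= f x) -> (forall x, f x <= g x) ->
  \int[mu]_x f x <= \int[mu]_x g x.
Proof.
move=> f0 fg; have g0 x : 0 <= g x := le_trans (f0 x) (fg x).
rewrite !ge0_integralTE//; apply: ereal_sup_le => _ [h hf <-].
by exists h => //= x; exact: le_trans (hf x) (fg x).
Qed.

Lemma ge0_integral_pushforward_le d1 d2 (X : measurableType d1)
    (Y : measurableType d2) (mu : {measure set X -> \bar R}) (phi : X -> Y)
    (F : Y -> \bar R) :
  measurable_fun [set: X] phi -> (forall y, 0 <= F y) ->
  \int[pushforward mu phi]_y F y <= \int[mu]_x F (phi x).
Proof.
move=> mphi F0; rewrite [leLHS]ge0_integralTE//.
apply: ge_ereal_sup => _ [h hF <-].
rewrite -integralT_nnsfun ge0_integral_pushforward//; last first.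
- by move=> y _; rewrite lee_fin.
- exact/measurable_EFinP.
rewrite preimage_setT; apply: ge0_le_integralT => x /=; first by rewrite lee_fin.
exact: hF.
Qed.

Lemma integral_cst_probability d (T : measurableType d) (P : probability T R)
    (c : \bar R) :
  \int[P]_x (cst c x) = c.
Proof.
by rewrite integral_cst// [X in _ * X](_ : _ = 1) ?mule1//; exact: probability_setT.
Qed.

Context d1 d2 (T1 : measurableType d1) (T2 : measurableType d2).
Context (m1 : {sigma_finite_measure set T1 -> \bar R}).
Context (m2 : {sigma_finite_measure set T2 -> \bar R}).

Lemma ge0_integral_prod_le (G : T1 * T2 -> \bar R) (K : T1 -> \bar R) :
  (forall z, 0 <= G z) -> (forall x, \int[m2]_y G (x, y) <= K x) ->
  \int[m1 \x m2]_z G z <= \int[m1]_x K x.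
Proof.
move=> G0 GK; rewrite [leLHS]ge0_integralTE//.
apply: ge_ereal_sup => _ [h hG <-].
rewrite -integralT_nnsfun (fubini_tonelli1 (EFin \o h)); last 2 first.
- exact/measurable_EFinP.
- by move=> z /=; rewrite lee_fin.
apply: ge0_le_integralT => x; first by apply: integral_ge0 => y _; rewrite lee_fin.
apply: le_trans (GK x); apply: ge0_le_integralT => y /=; first by rewrite lee_fin.
exact: hG.
Qed.

Lemma ge0_integral_prod_mul (g : T1 -> R) (h : T2 -> R) :
  (forall x, (0 <= g x)%R) -> (forall y, (0 <= h y)%R) ->
  measurable_fun [set: T1] g -> measurable_fun [set: T2] h ->
  \int[m1 \x m2]_z (g z.1 * h z.2)%:E =
  \int[m1]_x (g x)%:E * \int[m2]_y (h y)%:E.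
Proof.
move=> g0 h0 mg mh.
rewrite (fubini_tonelli1 (fun z => (g z.1 * h z.2)%:E)); last 2 first.
- apply/measurable_EFinP; apply: measurable_funM.
    exact: measurableT_comp mg measurable_fst.
  exact: measurableT_comp mh measurable_snd.
- by move=> z /=; rewrite lee_fin mulr_ge0.
rewrite /fubini_F.
under eq_integral => x _.
  under eq_integral do rewrite /= EFinM.
  rewrite ge0_integralZl_EFin//; last 2 first.
  - by move=> y _; rewrite lee_fin.
  - exact/measurable_EFinP.
  over.
rewrite ge0_integralZr//.
- exact/measurable_EFinP.
- by move=> x _; rewrite lee_fin.
- by apply: integral_ge0 => y _; rewrite lee_fin.
Qed.

End integral_inequalities.

Section dotp.
Context (R : realType).

Lemma dotpDl n (x x' y : 'rV[R]_n) : dotp (x + x') y = dotp x y + dotp x' y.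
Proof. by rewrite /dotp -big_split; apply: eq_bigr => i _; rewrite mxE mulrDl. Qed.

Lemma dotpNl n (x y : 'rV[R]_n) : dotp (- x) y = - dotp x y.
Proof. by rewrite /dotp -sumrN; apply: eq_bigr => i _; rewrite mxE mulNr. Qed.

Lemma dotpNr n (x y : 'rV[R]_n) : dotp x (- y) = - dotp x y.
Proof. by rewrite /dotp -sumrN; apply: eq_bigr => i _; rewrite mxE mulrN. Qed.

Lemma dotpZl n a (x y : 'rV[R]_n) : dotp (a *: x) y = a * dotp x y.
Proof. by rewrite /dotp mulr_sumr; apply: eq_bigr => i _; rewrite mxE mulrA. Qed.

Lemma dotp0r n (x : 'rV[R]_n) : dotp x 0 = 0.
Proof. by rewrite /dotp big1// => i _; rewrite mxE mulr0. Qed.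

Lemma dotp_mulmxl n m (x : 'rV[R]_n) (A : 'M[R]_(n, m)) (y : 'rV[R]_m) :
  dotp (x *m A) y = dotp x (y *m A^T).
Proof.
rewrite /dotp; under eq_bigr do rewrite mxE mulr_suml.
rewrite exchange_big /=; apply: eq_bigr => i _.
rewrite mxE mulr_sumr; apply: eq_bigr => j _.
by rewrite mxE -mulrA [A i j * _]mulrC.
Qed.

Lemma dotp_row_mx n1 n2 (a1 b1 : 'rV[R]_n1) (a2 b2 : 'rV[R]_n2) :
  dotp (row_mx a1 a2) (row_mx b1 b2) = dotp a1 b1 + dotp a2 b2.
Proof.
by rewrite /dotp big_split_ord /=; congr (_ + _); apply: eq_bigr => i _;
  rewrite ?row_mxEl ?row_mxEr.
Qed.

End dotp.

Section legendre.
Local Open Scope ereal_scope.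
Context (R : realType).

Lemma legendre_ge0 n (L : 'rV[R]_n -> \bar R) u : L 0%R = 0 -> 0 <= legendre L u.
Proof.
by move=> L0; apply: ereal_sup_ubound; exists 0%R => //; rewrite L0 dotp0r sube0.
Qed.

(* For [L >= 0] with [L 0 = 0], only the [y] with [<u, y> >= L y] matter in the
   supremum, and those terms only shrink when [u] is scaled down. *)
Lemma legendre_scale_le n (L : 'rV[R]_n -> \bar R) (t : R) u :
  (forall y, 0 <= L y) -> L 0%R = 0 -> (0 <= t <= 1)%R ->
  legendre L (t *: u) <= legendre L u.
Proof.
move=> L_ge0 L0 /andP[t0 t1]; apply: ge_ereal_sup => _ [y _ <-].
have := L_ge0 y; case Ly: (L y) => [r| |]//=; last by rewrite leNye.
rewrite lee_fin => r0; rewrite dotpZl.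
have [ru|ur] := leP r (dotp u y).
  apply: le_trans (ereal_sup_ubound _); last by exists y.
  by rewrite Ly -EFinB lee_fin; nra.
by apply: le_trans (legendre_ge0 u L0); rewrite -EFinB lee_fin; nra.
Qed.

Lemma legendre_row_mx_le n1 n2 (L : 'rV[R]_(n1 + n2) -> \bar R)
    (L1 : 'rV[R]_n1 -> \bar R) (L2 : 'rV[R]_n2 -> \bar R) v1 v2 :
  (forall y, 0 <= L1 y) -> (forall y, 0 <= L2 y) ->
  (forall y1 y2, L (row_mx y1 y2) = L1 y1 + L2 y2) ->
  legendre L (row_mx v1 v2) <= legendre L1 v1 + legendre L2 v2.
Proof.
move=> L1_ge0 L2_ge0 LE; apply: ge_ereal_sup => _ [y _ <-].
rewrite -(hsubmxK y) LE dotp_row_mx.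
have := L1_ge0 (lsubmx y); have := L2_ge0 (rsubmx y).
case L1y: (L1 (lsubmx y)) => [r1| |]//; case L2y: (L2 (rsubmx y)) => [r2| |]// _ _;
  rewrite /= ?leNye//.
rewrite -EFinD (_ : (_ - _ = (dotp v1 (lsubmx y) - r1) + (dotp v2 (rsubmx y) - r2))%R);
  last by ring.
by rewrite EFinD; apply: leeD; apply: ereal_sup_ubound;
  [exists (lsubmx y) => //; rewrite L1y | exists (rsubmx y) => //; rewrite L2y].
Qed.

End legendre.

Section log_laplace.
Local Open Scope ereal_scope.
Context (R : realType).

Definition mgf n (mu : set 'rV[R]_n -> \bar R) (y : 'rV[R]_n) : \bar R :=
  \int[mu]_x (expR (dotp x y))%:E.

(* [Lambda] applies [ln] to every finite value, whereas [lne] sends the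
   nonpositive reals to [-oo]. *)
Lemma LambdaE n (mu : set 'rV[R]_n -> \bar R) y :
  0 < mgf mu y -> Lambda mu y = lne (mgf mu y).
Proof.
change (0 < mgf mu y ->
  match mgf mu y with r%:E => (ln r)%:E | +oo => +oo | -oo => -oo end =
  lne (mgf mu y)).
by case: (mgf mu y) => [r| |]// r_gt0; rewrite lne_EFin.
Qed.

Lemma mgf_pushforward d (X : measurableType d) (mu : {measure set X -> \bar R})
    m (f : X -> 'rV[R]_m) y :
  measurable_fun [set: X] f ->
  mgf (pushforward mu f) y = \int[mu]_x (expR (dotp (f x) y))%:E.
Proof.
move=> mf; rewrite /mgf ge0_integral_pushforward ?preimage_setT//.
exact: measurable_expR_dotp.
Qed.

Lemma mgf0 n (mu : probability 'rV[R]_n R) : mgf mu 0 = 1.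
Proof.
rewrite /mgf; under eq_integral do rewrite dotp0r expR0.
exact: integral_cst_probability.
Qed.

Lemma mgf_symm n (mu : probability 'rV[R]_n R) y :
  mgf (symm_meas mu) y = mgf mu y * mgf mu (- y).
Proof.
rewrite (mgf_pushforward (mu \x reflect_probability mu)); last first.
  exact: measurable_addrV.
under eq_integral do rewrite dotpDl expRD.
rewrite (@ge0_integral_prod_mul _ _ _ _ _ _ _ (fun x => expR (dotp x y))
                                 (fun x => expR (dotp x y))); last 4 first.
- by move=> x; rewrite expR_ge0.
- by move=> x; rewrite expR_ge0.
- exact: measurableT_comp (@measurable_expR R) (measurable_dotp _).
- exact: measurableT_comp (@measurable_expR R) (measurable_dotp _).
congr (_ * _); transitivity (mgf (reflect_meas mu) y); first by [].
rewrite mgf_pushforward; last exact: measurable_opprV.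
by apply: eq_integral => x _; rewrite dotpNl -dotpNr.
Qed.

(* Averaging [e^t + e^-t >= 2] against the symmetric measure [symm_meas mu]. *)
Lemma mgf_symm_ge1 n (mu : probability 'rV[R]_n R) y :
  1 <= mgf (symm_meas mu) y.
Proof.
have symmN : mgf (symm_meas mu) (- y) = mgf (symm_meas mu) y.
  by rewrite !mgf_symm opprK muleC.
have : 2%:E <= mgf (symm_meas mu) y + mgf (symm_meas mu) (- y).
  change (2%:E <= mgf (symm_probability mu) y + mgf (symm_probability mu) (- y)).
  rewrite /mgf -ge0_integralD//; last 2 first.
  - exact: measurable_expR_dotp.
  - exact: measurable_expR_dotp.
  rewrite -[leLHS](integral_cst_probability (symm_probability mu)).
  apply: ge0_le_integral => //.
  - by move=> x _; rewrite lee_fin.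
  - by apply: emeasurable_funD; exact: measurable_expR_dotp.
  move=> x _ /=; rewrite dotpNr -EFinD lee_fin.
  by have := expR_ge1Dx (dotp x y); have := expR_ge1Dx (- dotp x y); lra.
rewrite symmN; case: (mgf (symm_meas mu) y) => [r| |]//=.
  by rewrite -EFinD !lee_fin; lra.
by move=> _; rewrite leey.
Qed.

Lemma Lambda_symmE n (mu : probability 'rV[R]_n R) y :
  Lambda (symm_meas mu) y = lne (mgf (symm_meas mu) y).
Proof. by apply: LambdaE; apply: lt_le_trans (mgf_symm_ge1 mu y). Qed.

Lemma Lambda_symm_ge0 n (mu : probability 'rV[R]_n R) y :
  0 <= Lambda (symm_meas mu) y.
Proof. by rewrite Lambda_symmE lne_ge0 mgf_symm_ge1. Qed.

Lemma Lambda_symm0 n (mu : probability 'rV[R]_n R) : Lambda (symm_meas mu) 0 = 0.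
Proof. by rewrite Lambda_symmE mgf_symm oppr0 mgf0 mule1 lne1. Qed.

End log_laplace.

Lemma le_expeR_ereal_inf (R : realType) (a : \bar R) (S : set (\bar R)) :
  (forall s, S s -> a <= expeR s)%E -> (a <= expeR (ereal_inf S))%E.
Proof.
case: a => [r| |] aS; last exact: leNye.
- have [r_le0|r_gt0] := leP r 0; first exact: le_trans (expeR_ge0 _).
  rewrite -[r]lnK ?posrE// -[(expR _)%:E]/(expeR (ln r)%:E) lee_expeR.
  by apply: le_ereal_inf_tmp => s Ss; rewrite -lee_expeR /= lnK ?posrE//; exact: aS.
- suff -> : ereal_inf S = +oo%E by [].
  apply/ereal_inf_pinfty => s /aS; case: s => [s| |]//=; by rewrite leye_eq.
Qed.

Section tau_affine.
Local Open Scope ereal_scope.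
Context (R : realType) n m (A : 'M[R]_(n, m)) (b : 'rV[R]_m).
Let L x := (x *m A + b)%R.

Lemma inf_conv_affine_le (W : 'rV[R]_n -> \bar R) (W' : 'rV[R]_m -> \bar R)
    (f : 'rV[R]_m -> R) x :
  (forall u, W' (u *m A) <= W u) ->
  inf_conv W' f (L x) <= inf_conv W (f \o L) x.
Proof.
move=> W'W; apply: le_ereal_inf_tmp => _ [y _ <-].
apply: le_trans (ereal_inf_lbound _) _; first by exists (L y).
have -> : (L x - L y = (x - y) *m A)%R.
  by rewrite /L mulmxBl opprD addrACA subrr addr0.
exact: leeD2r.
Qed.

Lemma property_tau_affine (mu : probability 'rV[R]_n R)
    (W : 'rV[R]_n -> \bar R) (W' : 'rV[R]_m -> \bar R) :
  (forall u, W' (u *m A) <= W u) ->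
  property_tau mu W -> property_tau (pushforward mu L) W'.
Proof.
have mL : measurable_fun [set: 'rV[R]_n] L := measurable_affine A b.
move=> W'W tau; change (property_tau (distribution mu (mfun_of mL)) W').
move=> f mf [M fM].
apply: le_trans (tau (f \o L) (measurableT_comp mf mL)
                     (ex_intro _ M (fun x => fM (L x)))).
apply: lee_pmul.
- by apply: integral_ge0 => x _; exact: expeR_ge0.
- by apply: integral_ge0 => x _; rewrite lee_fin expR_ge0.
- apply: le_trans (ge0_integral_pushforward_le mu mL (fun y => expeR_ge0 _)) _.
  apply: ge0_le_integralT => x; first exact: expeR_ge0.
  by rewrite lee_expeR; exact: inf_conv_affine_le.
- rewrite ge0_integral_pushforward ?preimage_setT//.
  by apply/measurable_EFinP; apply: measurableT_comp => //; exact: measurableT_comp.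
Qed.

End tau_affine.

Section tau_prod.
Local Open Scope ereal_scope.
Context (R : realType) (n1 n2 : nat) (mu1 : probability 'rV[R]_n1 R).
Context (mu2 : probability 'rV[R]_n2 R) (f : 'rV[R]_(n1 + n2) -> R) (M : R).
Hypothesis mf : measurable_fun [set: 'rV[R]_(n1 + n2)] f.
Hypothesis fM : forall x, (`|f x| <= M)%R.

Definition fiber_integral z1 := \int[mu2]_y (expR (- f (row_mx z1 y)))%:E.

Definition fiber_potential z1 := (- ln (fine (fiber_integral z1)))%R.

Let mexpN : measurable_fun [set: 'rV[R]_(n1 + n2)] (fun x => (expR (- f x))%:E).
Proof.
by apply/measurable_EFinP; apply: measurableT_comp => //; exact: measurableT_comp.
Qed.

Let mf_row : measurable_fun [set: 'rV[R]_n1 * 'rV[R]_n2] (fun p => f (row_mx p.1 p.2)).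
Proof. exact: measurableT_comp mf (@measurable_row_mx R n1 n2). Qed.

Let mexpN_row : measurable_fun [set: 'rV[R]_n1 * 'rV[R]_n2]
  (fun p => (expR (- f (row_mx p.1 p.2)))%:E).
Proof. exact: measurableT_comp mexpN (@measurable_row_mx R n1 n2). Qed.

Lemma fiber_integral_bounds z1 :
  (expR (- M))%:E <= fiber_integral z1 <= (expR M)%:E.
Proof.
apply/andP; split.
- rewrite -[leLHS](integral_cst_probability mu2).
  apply: ge0_le_integralT => y /=; first by rewrite lee_fin expR_ge0.
  by rewrite lee_fin ler_expR lerN2; exact: le_trans (ler_norm _) (fM _).
- rewrite -[leRHS](integral_cst_probability mu2).
  apply: ge0_le_integralT => y /=; first by rewrite lee_fin expR_ge0.
  rewrite lee_fin ler_expR; apply: le_trans (fM (row_mx z1 y)).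
  by rewrite -normrN ler_norm.
Qed.

Lemma fiber_integralE z1 : (fine (fiber_integral z1))%:E = fiber_integral z1.
Proof. by have /andP[] := fiber_integral_bounds z1; case: (fiber_integral z1). Qed.

Lemma expN_fiber_potential z1 : (expR (- fiber_potential z1))%:E = fiber_integral z1.
Proof.
have /andP[+ _] := fiber_integral_bounds z1; rewrite -fiber_integralE lee_fin => lb.
by rewrite opprK lnK// posrE; exact: lt_le_trans (expR_gt0 _) lb.
Qed.

Lemma fiber_potential_bounded z1 : (`|fiber_potential z1| <= M)%R.
Proof.
have := fiber_integral_bounds z1; rewrite -fiber_integralE !lee_fin => /andP[lb ub].
have i_gt0 : (0 < fine (fiber_integral z1))%R := lt_le_trans (expR_gt0 _) lb.
rewrite normrN ler_norml; apply/andP; split.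
- by rewrite -(expRK (- M)%R) ler_ln ?posrE ?expR_gt0.
- by rewrite -(expRK M) ler_ln ?posrE ?expR_gt0.
Qed.

Lemma measurable_fiber_potential : measurable_fun [set: 'rV[R]_n1] fiber_potential.
Proof.
do 3 apply: measurableT_comp => //.
apply: measurable_fun_fubini_tonelli_F mexpN_row _ => p.
by rewrite lee_fin expR_ge0.
Qed.

Lemma integral_expN_prod_meas :
  \int[prod_meas mu1 mu2]_x (expR (- f x))%:E =
  \int[mu1]_z (expR (- fiber_potential z))%:E.
Proof.
rewrite (ge0_integral_pushforward (@measurable_row_mx R n1 n2))//.
rewrite preimage_setT (fubini_tonelli1 _ mexpN_row)//.
by apply: eq_integral => x _; rewrite expN_fiber_potential.
Qed.

Context (W1 : 'rV[R]_n1 -> \bar R) (W2 : 'rV[R]_n2 -> \bar R).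
Context (W : 'rV[R]_(n1 + n2) -> \bar R).
Hypothesis W1_ge0 : forall u, 0 <= W1 u.
Hypothesis W_le : forall u1 u2, W (row_mx u1 u2) <= W1 u1 + W2 u2.
Hypothesis tau2 : property_tau mu2 W2.

(* Property (tau) for [mu2], applied to the section [f (row_mx z1 _)] shifted by
   the constant [W1 (x1 - z1)], for each candidate [z1] in the infimum. *)
Lemma integral_exp_inf_conv_le x1 :
  \int[mu2]_x2 expeR (inf_conv W f (row_mx x1 x2)) <=
  expeR (inf_conv W1 fiber_potential x1).
Proof.
apply: le_expeR_ereal_inf => _ [z1 _ <-] /=.
have := W1_ge0 (x1 - z1)%R.
case W1z: (W1 (x1 - z1)%R) => [w| |]// _; last by rewrite leey.
pose g y := (f (row_mx z1 y) + w)%R.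
have mg : measurable_fun [set: 'rV[R]_n2] g.
  by apply: measurable_funD => //; exact: measurable_fun_pair2 mf_row.
have gM y : (`|g y| <= M + `|w|)%R.
  by apply: le_trans (ler_normD _ _) _; rewrite lerD2r.
have int_g : \int[mu2]_y (expR (- g y))%:E =
             (expR (- (w + fiber_potential z1)))%:E.
  under eq_integral do rewrite /g opprD expRD mulrC EFinM.
  rewrite ge0_integralZl_EFin//; last exact: measurable_fun_pair2 mexpN_row.
  by rewrite -/(fiber_integral z1) -expN_fiber_potential -EFinM -expRD opprD addrC.
have h_le x2 : expeR (inf_conv W f (row_mx x1 x2)) <= expeR (inf_conv W2 g x2).
  rewrite lee_expeR; apply: le_ereal_inf_tmp => _ [y2 _ <-].
  apply: le_trans (ereal_inf_lbound _) _; first by exists (row_mx z1 y2).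
  rewrite /= opp_row_mx add_row_mx; apply: le_trans (leeD2r _ (W_le _ _)) _.
  rewrite W1z /g EFinD; case: (W2 _) => [a| |]//=.
  by rewrite -!EFinD lee_fin; lra.
have := tau2 mg (ex_intro _ _ gM); rewrite int_g -EFinD /= => tau_g.
have -> : expR (w + fiber_potential z1) =
          (1 * (expR (- (w + fiber_potential z1)))^-1)%R.
  by rewrite mul1r -expRN opprK.
rewrite EFinM lee_pdivlMr ?expR_gt0//; apply: le_trans tau_g.
apply: lee_wpmul2r; first by rewrite lee_fin expR_ge0.
exact: ge0_le_integralT (fun x2 => expeR_ge0 _) h_le.
Qed.

End tau_prod.

Lemma property_tau_prod (R : realType) (n1 n2 : nat)
    (mu1 : probability 'rV[R]_n1 R) (mu2 : probability 'rV[R]_n2 R)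
    (W1 : 'rV[R]_n1 -> \bar R) (W2 : 'rV[R]_n2 -> \bar R)
    (W : 'rV[R]_(n1 + n2) -> \bar R) :
  (forall u, 0 <= W1 u)%E ->
  (forall u1 u2, W (row_mx u1 u2) <= W1 u1 + W2 u2)%E ->
  property_tau mu1 W1 -> property_tau mu2 W2 ->
  property_tau (prod_meas mu1 mu2) W.
Proof.
move=> W1_ge0 W_le tau1 tau2.
change (property_tau (prod_probability mu1 mu2) W).
move=> f mf [M fM]; rewrite (integral_expN_prod_meas mu1 mu2 mf fM).
apply: le_trans (tau1 _ (measurable_fiber_potential mu2 mf)
                      (ex_intro _ M (fiber_potential_bounded mu2 fM))).
apply: lee_pmul => //.
- by apply: integral_ge0 => x _; exact: expeR_ge0.
- by apply: integral_ge0 => x _; rewrite lee_fin expR_ge0.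
apply: le_trans (ge0_integral_pushforward_le (mu1 \x mu2)%E
  (@measurable_row_mx R n1 n2) (fun _ => expeR_ge0 _)) _.
apply: ge0_integral_prod_le => [z|x1]; first exact: expeR_ge0.
exact: (integral_exp_inf_conv_le mf fM W1_ge0 W_le tau2 x1).
Qed.

Section IC_cost.
Local Open Scope ereal_scope.
Context (R : realType).

(* The cost [Lambda^*_{\overline mu} (. / beta)], so that [IC beta mu] unfolds
   to [property_tau mu (IC_cost mu beta)]. *)
Definition IC_cost n (mu : set 'rV[R]_n -> \bar R) (beta : R) (u : 'rV[R]_n) :=
  legendre (Lambda (symm_meas mu)) (beta^-1 *: u).

Lemma IC_cost_ge0 n (mu : probability 'rV[R]_n R) beta u : 0 <= IC_cost mu beta u.
Proof. exact/legendre_ge0/Lambda_symm0. Qed.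

Lemma IC_cost_le n (mu : probability 'rV[R]_n R) (beta beta' : R) u :
  (0 < beta')%R -> (beta' <= beta)%R -> IC_cost mu beta u <= IC_cost mu beta' u.
Proof.
move=> b'_gt0 b'_le; have b_gt0 := lt_le_trans b'_gt0 b'_le.
rewrite /IC_cost; have -> : (beta^-1 *: u = (beta' / beta) *: (beta'^-1 *: u))%R.
  by rewrite scalerA mulrAC mulfV ?gt_eqF// mul1r.
apply: legendre_scale_le; [exact: Lambda_symm_ge0|exact: Lambda_symm0|].
by rewrite divr_ge0 ?(ltW b'_gt0) ?(ltW b_gt0)//= ler_pdivrMr// mul1r.
Qed.

Section affine.
Context (n m : nat) (A : 'M[R]_(n, m)) (b : 'rV[R]_m).
Let L x := (x *m A + b)%R.

Lemma mgf_affine (mu : {measure set 'rV[R]_n -> \bar R}) y :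
  mgf (pushforward mu L) y = (expR (dotp b y))%:E * mgf mu (y *m A^T).
Proof.
rewrite mgf_pushforward; last exact: measurable_affine.
under eq_integral do rewrite dotpDl dotp_mulmxl expRD mulrC EFinM.
by rewrite ge0_integralZl_EFin//; exact: measurable_expR_dotp.
Qed.

(* The translation [b] cancels against its reflection. *)
Lemma mgf_symm_affine (mu : probability 'rV[R]_n R) y :
  mgf (symm_meas (pushforward mu L)) y = mgf (symm_meas mu) (y *m A^T).
Proof.
rewrite (mgf_symm (distribution mu (mfun_of (measurable_affine A b)))).
rewrite !mgf_affine mgf_symm mulNmx muleACA -EFinM -expRD dotpNr subrr.
by rewrite expR0 mul1e.
Qed.

Lemma IC_cost_affine_le (mu : probability 'rV[R]_n R) beta u :
  IC_cost (pushforward mu L) beta (u *m A) <= IC_cost mu beta u.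
Proof.
apply: ge_ereal_sup => _ [y _ <-].
rewrite (Lambda_symmE (distribution mu (mfun_of (measurable_affine A b)))).
rewrite mgf_symm_affine -Lambda_symmE scalemxAl dotp_mulmxl.
by apply: ereal_sup_ubound; exists (y *m A^T).
Qed.

Lemma IC_affine (mu : probability 'rV[R]_n R) beta :
  IC beta mu -> IC beta (pushforward mu L).
Proof. exact/property_tau_affine/IC_cost_affine_le. Qed.

End affine.

Section product.
Context (n1 n2 : nat) (mu1 : probability 'rV[R]_n1 R) (mu2 : probability 'rV[R]_n2 R).

Lemma mgf_prod_meas y1 y2 :
  mgf (prod_meas mu1 mu2) (row_mx y1 y2) = mgf mu1 y1 * mgf mu2 y2.
Proof.
rewrite mgf_pushforward; last exact: measurable_row_mx.
under eq_integral do rewrite dotp_row_mx expRD.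
rewrite (@ge0_integral_prod_mul _ _ _ _ _ _ _ (fun x => expR (dotp x y1))
                                 (fun x => expR (dotp x y2)))//.
- exact: measurableT_comp (@measurable_expR R) (measurable_dotp _).
- exact: measurableT_comp (@measurable_expR R) (measurable_dotp _).
Qed.

Lemma mgf_symm_prod_meas y1 y2 :
  mgf (symm_meas (prod_meas mu1 mu2)) (row_mx y1 y2) =
  mgf (symm_meas mu1) y1 * mgf (symm_meas mu2) y2.
Proof.
rewrite (mgf_symm (prod_probability mu1 mu2)).
by rewrite opp_row_mx !mgf_prod_meas !mgf_symm muleACA.
Qed.

Lemma Lambda_symm_prod_meas y1 y2 :
  Lambda (symm_meas (prod_meas mu1 mu2)) (row_mx y1 y2) =
  Lambda (symm_meas mu1) y1 + Lambda (symm_meas mu2) y2.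
Proof.
have mgf_symm_pos k (mu : probability 'rV[R]_k R) y :
    mgf (symm_meas mu) y \in `]0, +oo].
  by rewrite in_itv/= leey andbT; apply: lt_le_trans (mgf_symm_ge1 mu y).
rewrite (Lambda_symmE (prod_probability mu1 mu2)).
by rewrite mgf_symm_prod_meas lneM// -!Lambda_symmE.
Qed.

Lemma IC_cost_prod_meas_le (beta beta1 beta2 : R) u1 u2 :
  (0 < beta1)%R -> (beta1 <= beta)%R -> (0 < beta2)%R -> (beta2 <= beta)%R ->
  IC_cost (prod_meas mu1 mu2) beta (row_mx u1 u2) <=
  IC_cost mu1 beta1 u1 + IC_cost mu2 beta2 u2.
Proof.
move=> b1_gt0 b1_le b2_gt0 b2_le.
apply: le_trans
  (leeD (IC_cost_le mu1 u1 b1_gt0 b1_le) (IC_cost_le mu2 u2 b2_gt0 b2_le)).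
rewrite /IC_cost scale_row_mx; apply: legendre_row_mx_le Lambda_symm_prod_meas.
- exact: Lambda_symm_ge0.
- exact: Lambda_symm_ge0.
Qed.

Lemma IC_prod (beta1 beta2 : R) : (0 < beta1)%R -> (0 < beta2)%R ->
  IC beta1 mu1 -> IC beta2 mu2 -> IC (Num.max beta1 beta2) (prod_meas mu1 mu2).
Proof.
move=> b1_gt0 b2_gt0; apply: property_tau_prod => [u|u1 u2]; first exact: IC_cost_ge0.
by apply: IC_cost_prod_meas_le; rewrite ?le_max ?lexx ?orbT.
Qed.

End product.

Lemma conv_measE n (mu1 mu2 : probability 'rV[R]_n R) :
  conv_meas mu1 mu2 =
  pushforward (prod_meas mu1 mu2) (fun x => x *m col_mx 1%:M 1%:M + 0)%R.
Proof.
apply/funext => S; rewrite /conv_meas /pushforward; congr ((mu1 \x mu2) _).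
by apply/funext => p; rewrite /preimage /= mul_row_col !mulmx1 addr0.
Qed.

Lemma reflect_measE n (mu : probability 'rV[R]_n R) :
  reflect_meas mu = pushforward mu (fun x => x *m (- 1%:M) + 0)%R.
Proof.
apply/funext => S; rewrite /reflect_meas /pushforward; congr (mu _).
by apply/funext => x; rewrite /preimage /= mulmxN mulmx1 addr0.
Qed.

Lemma IC_conv n (mu1 mu2 : probability 'rV[R]_n R) (beta1 beta2 : R) :
  (0 < beta1)%R -> (0 < beta2)%R -> IC beta1 mu1 -> IC beta2 mu2 ->
  IC (Num.max beta1 beta2) (conv_meas mu1 mu2).
Proof.
move=> b1_gt0 b2_gt0 ic1 ic2; have ic_prod := IC_prod b1_gt0 b2_gt0 ic1 ic2.
by rewrite conv_measE; exact: (@IC_affine _ _ _ _ (prod_probability mu1 mu2) _ ic_prod).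
Qed.

Lemma IC_symm n (mu : probability 'rV[R]_n R) (beta : R) :
  (0 < beta)%R -> IC beta mu -> IC beta (symm_meas mu).
Proof.
move=> b_gt0 ic.
have ic_refl : IC beta (reflect_meas mu) by rewrite reflect_measE; exact: IC_affine.
rewrite -[beta]maxxx.
exact: (@IC_conv _ mu (reflect_probability mu) _ _ b_gt0 b_gt0 ic ic_refl).
Qed.

End IC_cost.

Theorem proposition8 (R : realType) :
  (* 1. affine images *)
  (forall (n : nat) (beta : R) (mu : probability 'rV[R]_n R),
      0 < beta -> IC beta mu ->
      forall (m : nat) (L : 'rV[R]_n -> 'rV[R]_m),
        affine_map L -> IC beta (pushforward mu L)) /\
  (* 2. products *)
  (forall (n1 n2 : nat) (beta1 beta2 : R)
          (mu1 : probability 'rV[R]_n1 R) (mu2 : probability 'rV[R]_n2 R),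
      0 < beta1 -> 0 < beta2 -> IC beta1 mu1 -> IC beta2 mu2 ->
      IC (Num.max beta1 beta2) (prod_meas mu1 mu2)) /\
  (* 3. convolutions (n1 = n2 = n) *)
  (forall (n : nat) (beta1 beta2 : R)
          (mu1 mu2 : probability 'rV[R]_n R),
      0 < beta1 -> 0 < beta2 -> IC beta1 mu1 -> IC beta2 mu2 ->
      IC (Num.max beta1 beta2) (conv_meas mu1 mu2)) /\
  (* 4. symmetrization *)
  (forall (n : nat) (beta : R) (mu : probability 'rV[R]_n R),
      0 < beta -> IC beta mu -> IC beta (symm_meas mu)).
Proof.
split; [|split; [|split]].
- move=> n beta mu _ ic m L [A [b LE]].
  by rewrite (funext LE); exact: IC_affine.
- by move=> *; exact: IC_prod.
- by move=> *; exact: IC_conv.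
- by move=> *; exact: IC_symm.
Qed.
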